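(* Let $\Gamma$ be a metric graph or a tropical curve with a real structure $\iota$, let $D_1,D_2$ be real divisors on $\Gamma$, and let $f$ be a rational function on $\Gamma$ with $\Delta(f)=D_2-D_1$. Then $\overline f=f$, where $\overline f(p)=f(\iota(p))$.
   Context: A metric graph is a compact connected metric space locally isometric to star-shaped sets $\{te^{2k\pi i/n}:0\le t<r\}\subset\mathbb C$; vertices are points of local valence $\ne2$, edges are the components of the complement of the vertices. A tropical curve is the union of a metric graph and finitely many unbounded edges isometric to $[0,\infty]$, each attached at its point $0$. A real structure is an isometric involution $\iota$; $\overline p=\iota(p)$. A divisor is a finite formal $\mathbb Z$-combination of points; $\overline D(p)=D(\overline p)$, and $D$ is real if $\overline D=D$. A rational function is a continuous $f:\Gamma\to\mathbb R$, piecewise affine with integer slopes and finitely many pieces on each edge; $\Delta(f)(p)$ is the sum of the outgoing slopes of $f$ at $p$ and $\Delta(f)=\sum_p\Delta(f)(p)p$. *)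

From HB Require Import structures.
From mathcomp Require Import all_boot all_order all_algebra.
From mathcomp Require Import reals.
From Stdlib Require List.
Set Implicit Arguments. Unset Strict Implicit. Unset Printing Implicit Defensive.
Import Order.TTheory GRing.Theory Num.Theory.
Local Open Scope ring_scope.

(* A tropical curve (or metric graph, when there are no points at infinity),
   given through a combinatorial model: a finite connected multigraph (loops
   and multiple edges allowed, vertices of valence 2 allowed) with edge
   lengths.  An edge e of finite length L is isometric to [0,L], glued at
   0 to [src e] and at L to [tgt e].  An edge of infinite length ([len e =
   None]) is an unbounded edge [0,oo], glued at 0 to [src e]; its point at
   infinity is the vertex [tgt e], which is flagged by [inf]. *)
Record tcurve (R : realType) := TCurve {
  V : finType;
  E : finType;
  src : E -> V;
  tgt : E -> V;
  len : E -> option R;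
  inf : V -> bool;
  len_pos : forall e r, len e = Some r -> 0 < r;
  inf_edge : forall e, len e = None -> inf (tgt e);
  inf_no_src : forall v e, inf v -> src e != v;
  inf_unique_edge : forall v, inf v ->
     exists e, [/\ tgt e = v, len e = None & forall e', tgt e' = v -> e' = e];
  connected : forall S : {set V}, (exists v, v \in S) ->
     (forall e, (src e \in S) = (tgt e \in S)) -> S = setT
}.

(* raw points: a vertex, or the point at distance t from src e on edge e *)
Inductive rpoint (R : realType) (G : tcurve R) :=
  | PV of V G
  | PE of E G & R.
Arguments PV {R G}. Arguments PE {R G}.

Definition in_edge (R : realType) (G : tcurve R) (e : E G) (t : R) : bool :=
  (0 < t) && (if len e is Some L then t < L else true).

Definition valid (R : realType) (G : tcurve R) (p : rpoint G) : bool :=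
  match p with PV _ => true | PE e t => in_edge e t end.

Definition edge_fun (R : realType) (G : tcurve R) (f : rpoint G -> R) (e : E G)
  (t : R) : R :=
  if t == 0 then f (PV (src e))
  else if (if len e is Some L then t == L else false) then f (PV (tgt e))
  else f (PE e t).

Definition pw_affine (R : realType) (g : R -> R) (b : seq R) : Prop :=
  [/\ b`_0 = 0, (0 < size b)%N, sorted <%R b &
   forall i, (i.+1 < size b)%N -> exists m : int,
     forall t, b`_i <= t <= b`_i.+1 -> g t = g b`_i + m%:~R * (t - b`_i)].

(* rational function: continuous, piecewise affine with integer slopes,
   finitely many pieces on each edge *)
Definition rational_fun (R : realType) (G : tcurve R) (f : rpoint G -> R) : Prop :=
  forall e, exists b : seq R, pw_affine (edge_fun f e) b /\
    match len e with
    | Some L => last 0 b = L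
    | None => (exists m : int, forall t, last 0 b <= t ->
                 edge_fun f e t = edge_fun f e (last 0 b) + m%:~R * (t - last 0 b))
              /\
              (forall eps : R, 0 < eps -> exists M : R, forall t, M < t ->
                 `|edge_fun f e t - f (PV (tgt e))| < eps)
    end.

(* outgoing slope s of g at t in the increasing / decreasing direction *)
Definition fwd_slope (R : realType) (g : R -> R) (t : R) (s : int) : Prop :=
  exists2 eps : R, 0 < eps & forall h, 0 < h < eps -> g (t + h) = g t + s%:~R * h.
Definition bwd_slope (R : realType) (g : R -> R) (t : R) (s : int) : Prop :=
  exists2 eps : R, 0 < eps & forall h, 0 < h < eps -> g (t - h) = g t + s%:~R * h.

(* outgoing slope at the tgt-end of edge e; at a point at infinity the
   (continuous, real valued) function is locally constant, slope 0 *)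
Definition end_slope (R : realType) (G : tcurve R) (f : rpoint G -> R) (e : E G)
  (s : int) : Prop :=
  match len e with
  | Some L => bwd_slope (edge_fun f e) L s
  | None => s = 0 /\ exists M : R, forall t, M < t -> edge_fun f e t = f (PV (tgt e))
  end.

(* Delta(f) = D : D(p) is the sum of the outgoing slopes of f at p *)
Definition laplacian_eq (R : realType) (G : tcurve R) (f : rpoint G -> R)
  (D : rpoint G -> int) : Prop :=
  forall p, valid p ->
  match p with
  | PE e t => exists s1 s2 : int,
      [/\ fwd_slope (edge_fun f e) t s1, bwd_slope (edge_fun f e) t s2 &
          D p = s1 + s2]
  | PV v => exists s : E G -> int * int,
      (forall e, src e = v -> fwd_slope (edge_fun f e) 0 (s e).1) /\
      (forall e, tgt e = v -> end_slope f e (s e).2) /\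
      D p = \sum_(e : E G) ((src e == v)%:R * (s e).1 + (tgt e == v)%:R * (s e).2)
  end.

Definition divisor (R : realType) (G : tcurve R) (D : rpoint G -> int) : Prop :=
  exists l : list (rpoint G), forall p, valid p -> D p != 0 -> List.In p l.

(* A real structure, i.e. an isometric involution, given combinatorially as
   an involutive length-preserving automorphism of the model (possibly
   reversing edges). *)
Record real_str (R : realType) (G : tcurve R) := RealStr {
  sV : V G -> V G;
  sE : E G -> E G;
  flip : E G -> bool;
  sV_inv : forall v, sV (sV v) = v;
  sE_inv : forall e, sE (sE e) = e;
  flip_sE : forall e, flip (sE e) = flip e;
  len_sE : forall e, len (sE e) = len e;
  inf_sV : forall v, inf (sV v) = inf v;
  flip_fin : forall e, flip e -> len e <> None;
  ends_sE : forall e, if flip e then src (sE e) = sV (tgt e) /\ tgt (sE e) = sV (src e)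
                      else src (sE e) = sV (src e) /\ tgt (sE e) = sV (tgt e)
}.

Definition rs_map (R : realType) (G : tcurve R) (s : real_str G) (p : rpoint G) : rpoint G :=
  match p with
  | PV v => PV (sV s v)
  | PE e t => PE (sE s e)
      (if flip s e then (if len e is Some L then L - t else t) else t)
  end.

Definition real_div (R : realType) (G : tcurve R) (s : real_str G) (D : rpoint G -> int) : Prop :=
  forall p, valid p -> D (rs_map s p) = D p.

From mathcomp Require Import all_boot all_order all_algebra reals.
From mathcomp Require Import ring lra.
Import Order.TTheory GRing.Theory Num.Theory.
Set Implicit Arguments. Unset Strict Implicit.
Local Open Scope ring_scope.

(* Since D1 and D2 are real and the real structure is an isometric automorphism,
   f and f \o iota have the same Laplacian, so g := f \o iota - f is harmonic.
   A harmonic function is affine on every edge (its slopes are balanced at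
   interior points) and the outgoing slopes at each vertex sum to zero; at a
   vertex where g is maximal all of them are therefore zero, and connectedness
   makes g constant.  As iota is an involution, g \o iota = - g, so g = 0. *)

Section Slopes.
Variable R : realType.
Implicit Types (h k : R -> R) (t x : R) (a b : int).

Lemma common_pos_bound (e1 e2 : R) : 0 < e1 -> 0 < e2 ->
  exists2 m : R, 0 < m & m <= e1 /\ m <= e2.
Proof.
by move=> e1p e2p; exists (Num.min e1 e2); rewrite ?lt_min ?e1p // !ge_min !lexx ?orbT.
Qed.

Lemma int_affine_inj a b (c1 c2 x y : R) : x != y ->
  c1 + a%:~R * x = c2 + b%:~R * x -> c1 + a%:~R * y = c2 + b%:~R * y ->
  a = b /\ c1 = c2.
Proof.
move=> xy Ex Ey.
have /eqP : (a%:~R - b%:~R) * (x - y) = 0 :> R.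
  have -> : (a%:~R - b%:~R) * (x - y) =
    (c1 + a%:~R * x - (c2 + b%:~R * x)) - (c1 + a%:~R * y - (c2 + b%:~R * y)) :> R.
    by ring.
  by rewrite Ex Ey; ring.
rewrite mulf_eq0 !subr_eq0 (negbTE xy) orbF eqr_int => /eqP ab.
by split => //; move: Ex; rewrite ab; apply: addIr.
Qed.

Lemma fwd_slope_uniq h t a b : fwd_slope h t a -> fwd_slope h t b -> a = b.
Proof.
move=> [e1 e1p H1] [e2 e2p H2]; have [m mp [m1 m2]] := common_pos_bound e1p e2p.
have [] := @int_affine_inj a b (h t) (h t) (m / 2) (m / 4); first lra.
- by rewrite -H1 ?H2 //; lra.
- by rewrite -H1 ?H2 //; lra.
done.
Qed.

Lemma bwd_slope_uniq h t a b : bwd_slope h t a -> bwd_slope h t b -> a = b.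
Proof.
move=> [e1 e1p H1] [e2 e2p H2]; have [m mp [m1 m2]] := common_pos_bound e1p e2p.
have [] := @int_affine_inj a b (h t) (h t) (m / 2) (m / 4); first lra.
- by rewrite -H1 ?H2 //; lra.
- by rewrite -H1 ?H2 //; lra.
done.
Qed.

Lemma fwd_slopeB h k t a b : fwd_slope h t a -> fwd_slope k t b ->
  fwd_slope (fun x => h x - k x) t (a - b).
Proof.
move=> [e1 e1p H1] [e2 e2p H2]; have [m mp [m1 m2]] := common_pos_bound e1p e2p.
exists m => // x /andP[x0 xm].
by rewrite H1 ?H2 ?intrB; [ring | lra..].
Qed.

Lemma bwd_slopeB h k t a b : bwd_slope h t a -> bwd_slope k t b ->
  bwd_slope (fun x => h x - k x) t (a - b).
Proof.
move=> [e1 e1p H1] [e2 e2p H2]; have [m mp [m1 m2]] := common_pos_bound e1p e2p.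
exists m => // x /andP[x0 xm].
by rewrite H1 ?H2 ?intrB; [ring | lra..].
Qed.

Lemma eq_fwd_slope h k t a : h =1 k -> fwd_slope h t a -> fwd_slope k t a.
Proof. by move=> hk [e ep H]; exists e => // x xe; rewrite -!hk H. Qed.

Lemma eq_bwd_slope h k t a : h =1 k -> bwd_slope h t a -> bwd_slope k t a.
Proof. by move=> hk [e ep H]; exists e => // x xe; rewrite -!hk H. Qed.

Lemma fwd_slope_reflect h L t a :
  bwd_slope h (L - t) a -> fwd_slope (fun x => h (L - x)) t a.
Proof. by move=> [e ep H]; exists e => // x xe; rewrite -H //; congr h; ring. Qed.

Lemma bwd_slope_reflect h L t a :
  fwd_slope h (L - t) a -> bwd_slope (fun x => h (L - x)) t a.
Proof. by move=> [e ep H]; exists e => // x xe; rewrite -H //; congr h; ring. Qed.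

End Slopes.

Section BalancedSlopes.
Variables (R : realType) (h : R -> R) (a : int).

Lemma affine_bwd_slope (c T : R) (b : int) : 0 < T ->
  (forall u, 0 <= u < T -> h u = c + a%:~R * u) -> bwd_slope h T b ->
  h T = c + a%:~R * T /\ b = - a.
Proof.
move=> T0 Hlt [e ep H]; have [m mp [me mT]] := common_pos_bound ep T0.
suff [-> ->] : b = - a /\ h T = c + a%:~R * T by [].
have at_left x : 0 < x < m -> h T + b%:~R * x = (c + a%:~R * T) + (- a)%:~R * x.
  by move=> xm; rewrite -H ?Hlt ?intrN; [ring | lra..].
by apply: (@int_affine_inj _ _ _ _ _ (m / 2) (m / 4)); [lra | apply: at_left; lra..].
Qed.

Lemma affine_fwd_extend (c T : R) : 0 <= T ->
  (forall u, 0 <= u <= T -> h u = c + a%:~R * u) -> fwd_slope h T a ->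
  exists2 d : R, 0 < d & forall u, 0 <= u < T + d -> h u = c + a%:~R * u.
Proof.
move=> T0 Hle [d dp H]; exists d => // u /andP[u0 uTd].
have [uT|Tu] := leP u T; first by rewrite Hle ?u0.
have -> : u = T + (u - T) by ring.
by rewrite H ?Hle; [ring | lra..].
Qed.

Lemma balanced_slopes_affine (L : R) : 0 < L -> fwd_slope h 0 a ->
  (forall t, 0 < t < L -> exists s, fwd_slope h t s /\ bwd_slope h t (- s)) ->
  (exists b, bwd_slope h L b) ->
  forall t, 0 <= t <= L -> h t = h 0 + a%:~R * t.
Proof.
move=> L0 slope0 balanced [bL slopeL].
(* T is the supremum of the points up to which h is affine; the slope balance
   at T lets the affine piece be continued past T, so T = L. *)
pose A t := 0 <= t <= L /\ forall u, 0 <= u <= t -> h u = h 0 + a%:~R * u.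
have A0 : A 0.
  rewrite /A; split=> [|u u0]; first lra.
  have -> : u = 0 by lra.
  by rewrite mulr0 addr0.
have supA : classical_sets.has_sup A by split; [exists 0 | exists L => x [? _]; lra].
pose T := sup A.
have T0 : 0 <= T := sup_upper_bound supA A0.
have TL : T <= L.
  rewrite leNgt; apply/negP => LT; have TL0 : 0 < T - L by lra.
  by have [x [? _]] := sup_adherent TL0 supA; rewrite /T in LT *; lra.
have affine_lt u : 0 <= u < T -> h u = h 0 + a%:~R * u.
  move=> uT; have Tu0 : 0 < T - u by lra.
  have [x [_ Hx] ux] := sup_adherent Tu0 supA.
  by apply: Hx; rewrite /T in ux; lra.
have bwd_T b : 0 < T -> bwd_slope h T b -> h T = h 0 + a%:~R * T /\ b = - a.
  by move=> Tp; apply: affine_bwd_slope.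
have affine_le u : 0 <= u <= T -> h u = h 0 + a%:~R * u.
  move=> uT; have [uT'|] := ltP u T; first by apply: affine_lt; lra.
  move=> Tu; have -> : u = T by lra.
  have [->|Tp] := eqVneq T 0; first by rewrite mulr0 addr0.
  have {}Tp : 0 < T by lra.
  have [TeL|TneL] := eqVneq T L.
    by move: slopeL; rewrite -TeL => /(bwd_T _ Tp) [].
  have [s [_ Hs]] : exists s, fwd_slope h T s /\ bwd_slope h T (- s).
    by apply: balanced; rewrite Tp lt_neqAle TneL TL.
  by have [] := bwd_T _ Tp Hs.
have fwd_T : T < L -> fwd_slope h T a.
  move=> TL'; have [->|Tp] := eqVneq T 0; first exact: slope0.
  have {}Tp : 0 < T by lra.
  have [s [Hf Hb]] : exists s, fwd_slope h T s /\ bwd_slope h T (- s).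
    by apply: balanced; rewrite Tp TL'.
  by have [_ /oppr_inj <-] := bwd_T _ Tp Hb.
have TeqL : T = L.
  apply/eqP; rewrite eq_le TL /= leNgt; apply/negP => TL'.
  have [d dp Hd] := affine_fwd_extend T0 affine_le (fwd_T TL').
  have LT0 : 0 < L - T by lra.
  have [m mp [md mL]] := common_pos_bound dp LT0.
  have : A (T + m / 2) by split=> [|u um]; [lra | apply: Hd; lra].
  by move/(sup_upper_bound supA); rewrite -/T; lra.
by move=> t tL; apply: affine_le; rewrite TeqL.
Qed.

End BalancedSlopes.

Section Laplacian.
Variables (R : realType) (G : tcurve R).
Implicit Types (f g : rpoint G -> R) (D : rpoint G -> int).

Lemma edge_funB f g e t :
  edge_fun (fun p => f p - g p) e t = edge_fun f e t - edge_fun g e t.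
Proof.
by rewrite /edge_fun; case: (t == 0) => //; case: (len e) => // L; case: (t == L).
Qed.

Lemma end_slopeB f g e a b : end_slope f e a -> end_slope g e b ->
  end_slope (fun p => f p - g p) e (a - b).
Proof.
rewrite /end_slope; case: (len e) => [L|] => [Hf Hg|[-> [Mf Hf]] [-> [Mg Hg]]].
  by apply: eq_bwd_slope (bwd_slopeB Hf Hg) => t; rewrite edge_funB.
split=> //; exists (Num.max Mf Mg) => t; rewrite gt_max => /andP[tf tg].
by rewrite edge_funB Hf ?Hg.
Qed.

Lemma laplacian_eqB f g Df Dg : laplacian_eq f Df -> laplacian_eq g Dg ->
  laplacian_eq (fun p => f p - g p) (fun p => Df p - Dg p).
Proof.
move=> Hf Hg [v|e t] vp; move: (Hf _ vp) (Hg _ vp) => /=.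
  move=> [sf [Sf1 [Sf2 ->]]] [sg [Sg1 [Sg2 ->]]].
  exists (fun e => ((sf e).1 - (sg e).1, (sf e).2 - (sg e).2)); split; [|split].
  - move=> e ev; apply: eq_fwd_slope (fwd_slopeB (Sf1 e ev) (Sg1 e ev)) => x.
    by rewrite edge_funB.
  - by move=> e ev; apply: end_slopeB; [apply: Sf2 | apply: Sg2].
  - by rewrite -sumrB; apply: eq_bigr => e _ /=; ring.
move=> [sf1 [sf2 [Ff Bf ->]]] [sg1 [sg2 [Fg Bg ->]]].
exists (sf1 - sg1), (sf2 - sg2); split; last by ring.
- by apply: eq_fwd_slope (fwd_slopeB Ff Fg) => x; rewrite edge_funB.
- by apply: eq_bwd_slope (bwd_slopeB Bf Bg) => x; rewrite edge_funB.
Qed.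

Lemma eq_laplacian_eq f D D' : (forall p, valid p -> D p = D' p) ->
  laplacian_eq f D -> laplacian_eq f D'.
Proof. by move=> DD' Hf [v|e t] vp; move: (Hf _ vp); rewrite DD'. Qed.

End Laplacian.

Section RealStructure.
Variables (R : realType) (G : tcurve R) (s : real_str G).
Implicit Types (f : rpoint G -> R) (D : rpoint G -> int).

Lemma rs_mapK : involutive (rs_map s).
Proof.
case=> [v|e t] /=; first by rewrite sV_inv.
rewrite sE_inv flip_sE len_sE; case: (flip s e) => //.
by case: (len e) => // L; rewrite opprB addrC subrK.
Qed.

Lemma valid_rs_map p : valid p -> valid (rs_map s p).
Proof.
case: p => [v|e t] //=; rewrite /in_edge len_sE.
by case: (flip s e) => //; case: (len e) => // L /andP[t0 tL]; apply/andP; split; lra.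
Qed.

Lemma edge_fun_rs_map f e : ~~ flip s e ->
  edge_fun (fun p => f (rs_map s p)) e =1 edge_fun f (sE s e).
Proof.
move=> nf t; have := ends_sE s e.
by rewrite /edge_fun len_sE /= (negbTE nf) => -[-> ->].
Qed.

Lemma edge_fun_rs_map_flip f e L : flip s e -> len e = Some L ->
  edge_fun (fun p => f (rs_map s p)) e =1 (fun t => edge_fun f (sE s e) (L - t)).
Proof.
move=> fl eL t; have := ends_sE s e; rewrite /edge_fun /= len_sE eL fl => -[-> ->].
have L0 : L != 0 by rewrite gt_eqF // (len_pos eL).
have [->|t0] := eqVneq t 0; first by rewrite subr0 eqxx (negbTE L0).
have [->|tL] := eqVneq t L; first by rewrite subrr eqxx.
have -> : (L - t == 0) = false by rewrite subr_eq0 eq_sym (negbTE tL).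
suff -> : (L - t == L) = false by [].
by apply/negbTE; apply: contra t0; rewrite -subr_eq0 addrAC subrr sub0r oppr_eq0.
Qed.

Lemma fwd_slope_rs_map_flip f e L t a : flip s e -> len e = Some L ->
  bwd_slope (edge_fun f (sE s e)) (L - t) a ->
  fwd_slope (edge_fun (fun p => f (rs_map s p)) e) t a.
Proof.
move=> fl eL /fwd_slope_reflect; apply: eq_fwd_slope => x.
by rewrite (edge_fun_rs_map_flip _ fl eL).
Qed.

Lemma bwd_slope_rs_map_flip f e L t a : flip s e -> len e = Some L ->
  fwd_slope (edge_fun f (sE s e)) (L - t) a ->
  bwd_slope (edge_fun (fun p => f (rs_map s p)) e) t a.
Proof.
move=> fl eL /bwd_slope_reflect; apply: eq_bwd_slope => x.
by rewrite (edge_fun_rs_map_flip _ fl eL).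
Qed.

Lemma end_slope_rs_map f e a : ~~ flip s e ->
  end_slope f (sE s e) a -> end_slope (fun p => f (rs_map s p)) e a.
Proof.
move=> nf; rewrite /end_slope len_sE; case: (len e) => [L|].
  by apply: eq_bwd_slope => x; rewrite edge_fun_rs_map.
move=> [-> [M HM]]; split=> //; exists M => t tM.
by rewrite edge_fun_rs_map // HM //; have := ends_sE s e; rewrite (negbTE nf) => -[_ ->].
Qed.

Lemma laplacian_eq_rs_map f D : laplacian_eq f D ->
  laplacian_eq (fun p => f (rs_map s p)) (fun p => D (rs_map s p)).
Proof.
move=> Hf [v|e t] vp; have := Hf _ (valid_rs_map vp); last first.
  move=> /= [s1 [s2 [F B ->]]]; case fl: (flip s e) F B => F B; last first.
    have E := edge_fun_rs_map f (negbT fl).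
    by exists s1, s2; split;
      [exact: eq_fwd_slope (fsym E) F | exact: eq_bwd_slope (fsym E) B |].
  case eL: (len e) F B => [L|] F B; last by case: (flip_fin fl eL).
  exists s2, s1; split; last exact: addrC.
  - exact: fwd_slope_rs_map_flip B.
  - exact: bwd_slope_rs_map_flip F.
move=> /= [sw [Sw1 [Sw2 ->]]].
(* A flipped edge runs through its image backwards, exchanging its end slopes. *)
pose sf e := if flip s e then ((sw (sE s e)).2, (sw (sE s e)).1) else sw (sE s e).
exists sf; split; [|split].
- move=> e ev; rewrite /sf; have := ends_sE s e; case fl: (flip s e) => -[Hs Ht].
    case eL: (len e) => [L|]; last by case: (flip_fin fl eL).
    apply: (fwd_slope_rs_map_flip fl eL); rewrite subr0.
    by have := Sw2 (sE s e); rewrite /end_slope len_sE eL Ht ev; apply.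
  by apply: eq_fwd_slope (Sw1 _ _) => [x|]; rewrite ?edge_fun_rs_map ?fl ?Hs ?ev.
- move=> e ev; rewrite /sf; have := ends_sE s e; case fl: (flip s e) => -[Hs Ht].
    case eL: (len e) => [L|]; last by case: (flip_fin fl eL).
    rewrite /end_slope eL; apply: (bwd_slope_rs_map_flip fl eL); rewrite subrr.
    by apply: Sw1; rewrite Hs ev.
  by apply: end_slope_rs_map; [rewrite fl | apply: Sw2; rewrite Ht ev].
rewrite (reindex_inj (inv_inj (sE_inv s))); apply: eq_bigr => e _.
rewrite /sf; have := ends_sE s e; case: (flip s e) => -[-> ->];
  rewrite !(inj_eq (inv_inj (sV_inv s))) /=; [exact: addrC | by []].
Qed.

End RealStructure.

Definition net_flow (R : realType) (G : tcurve R) (a : E G -> int) (v : V G) : int :=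
  \sum_e ((src e == v)%:R * a e - (tgt e == v)%:R * a e).

Section Potential.
Variables (R : realType) (G : tcurve R) (c : V G -> R) (a : E G -> int).
Hypothesis potential_fin :
  forall e L, len e = Some L -> c (tgt e) = c (src e) + (a e)%:~R * L.
Hypothesis potential_inf : forall e, len e = None -> a e = 0 /\ c (tgt e) = c (src e).
Hypothesis net_flow0 : forall v, net_flow a v = 0.

Lemma net_flow_term_le0 v : (forall w, c w <= c v) ->
  forall e, (src e == v)%:R * a e - (tgt e == v)%:R * a e <= 0.
Proof.
move=> vmax e; case eL: (len e) => [L|]; last first.
  by rewrite (potential_inf eL).1 !mulr0 subr0.
have L0 := len_pos eL; have ce := potential_fin eL.
case: (eqVneq (src e) v) => [es|es]; case: (eqVneq (tgt e) v) => [et|et] /=.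
- by rewrite subrr.
- rewrite mul1r mul0r subr0 leNgt; apply/negP => ae.
  have : 0 < (a e)%:~R * L by rewrite mulr_gt0 // ltr0z.
  by have := vmax (tgt e); rewrite ce es; lra.
- rewrite mul0r mul1r sub0r oppr_le0 leNgt; apply/negP => ae.
  have : (a e)%:~R * L < 0 by rewrite pmulr_llt0 // ltrz0.
  by have := vmax (src e); rewrite -et ce; lra.
- by rewrite !mul0r subr0.
Qed.

Lemma max_vertex_edge v : (forall w, c w <= c v) ->
  forall e, src e = v \/ tgt e = v -> c (src e) = c (tgt e).
Proof.
move=> vmax e ev.
pose term e := (src e == v)%:R * a e - (tgt e == v)%:R * a e.
have term0 : term e = 0.
  apply/oppr_inj; rewrite oppr0.
  apply: (@psumr_eq0P _ _ xpredT (fun e => - term e)) => // [e' _|].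
    by rewrite oppr_ge0 net_flow_term_le0.
  by rewrite sumrN -[X in - X]/(net_flow a v) net_flow0 oppr0.
have [->//|ne] := eqVneq (src e) (tgt e).
case eL: (len e) => [L|]; last by rewrite (potential_inf eL).2.
rewrite (potential_fin eL); suff -> : a e = 0 by rewrite mul0r addr0.
move: term0; rewrite /term; case: ev => [es|et].
- rewrite -es eqxx eq_sym (negbTE ne).
  by rewrite mul1r mul0r subr0.
- rewrite -et eqxx (negbTE ne).
  by rewrite mul1r mul0r sub0r => /eqP; rewrite oppr_eq0 => /eqP.
Qed.

Lemma potential_const v w : c v = c w.
Proof.
have [vm _ vmax] := @arg_maxP _ _ _ v xpredT c isT.
have max_set : [set u | c u == c vm] = setT.
  apply: connected; first by exists vm; rewrite inE.
  move=> e; rewrite !inE; apply/eqP/eqP => ce.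
  - rewrite -(max_vertex_edge _ (or_introl erefl)) // => u.
    by rewrite ce; exact: vmax.
  - rewrite (max_vertex_edge _ (or_intror erefl)) // => u.
    by rewrite ce; exact: vmax.
suff all_max u : c u = c vm by rewrite !all_max.
have : u \in [set u | c u == c vm] by rewrite max_set in_setT.
by rewrite inE => /eqP.
Qed.

Lemma potential_flow0 e : a e = 0.
Proof.
case eL: (len e) => [L|]; last exact: (potential_inf eL).1.
have := potential_fin eL; rewrite (potential_const (tgt e) (src e)) => /eqP.
rewrite addrC -subr_eq subrr eq_sym mulf_eq0 intr_eq0 (gt_eqF (len_pos eL)) orbF.
by move/eqP.
Qed.

End Potential.

Section Harmonic.
Variables (R : realType) (G : tcurve R) (g : rpoint G -> R).
Hypothesis g_harmonic : laplacian_eq g (fun _ => 0).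

Lemma harmonic_balanced e t : valid (PE e t) ->
  exists s, fwd_slope (edge_fun g e) t s /\ bwd_slope (edge_fun g e) t (- s).
Proof.
move/g_harmonic => /= [s1 [s2 [F B s12]]]; exists s1; split=> //.
by rewrite (_ : - s1 = s2) //; apply/eqP; rewrite eq_sym -addr_eq0 addrC -s12.
Qed.

Lemma harmonic_edge_affine e : exists a : int, fwd_slope (edge_fun g e) 0 a /\
  forall t, 0 <= t -> (forall L, len e = Some L -> t <= L) ->
  edge_fun g e t = g (PV (src e)) + a%:~R * t.
Proof.
have [sv [Fsrc _]] := g_harmonic (p := PV (src e)) isT.
have Fe := Fsrc e erefl; exists (sv e).1; split=> // t t0 tL.
have -> : g (PV (src e)) = edge_fun g e 0 by rewrite /edge_fun eqxx.
case eL: (len e) tL => [L|] tL.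
  apply: (balanced_slopes_affine (len_pos eL) Fe) => [x xL||]; last by rewrite t0 tL.
    by apply: harmonic_balanced; rewrite /= /in_edge eL.
  have [st [_ [Btgt _]]] := g_harmonic (p := PV (tgt e)) isT.
  by exists (st e).2; move: (Btgt e erefl); rewrite /end_slope eL.
have [->|tn0] := eqVneq t 0; first by rewrite mulr0 addr0.
have tp : 0 < t by lra.
apply: (balanced_slopes_affine tp Fe) => [x xt||]; last by rewrite t0 lexx.
  by apply: harmonic_balanced; rewrite /= /in_edge eL; lra.
have et : valid (PE e t) by rewrite /= /in_edge eL tp.
have [s [_ Bt]] := harmonic_balanced et.
by exists (- s).
Qed.

Section EdgeSlopes.
Variable a : E G -> int.
Hypothesis a_src : forall e, fwd_slope (edge_fun g e) 0 (a e).
Hypothesis a_affine : forall e t, 0 <= t -> (forall L, len e = Some L -> t <= L) ->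
  edge_fun g e t = g (PV (src e)) + (a e)%:~R * t.

Lemma harmonic_tgt_fin e L : len e = Some L ->
  g (PV (tgt e)) = g (PV (src e)) + (a e)%:~R * L.
Proof.
move=> eL; have L0 := len_pos eL.
rewrite -a_affine; [|exact: ltW | by move=> L'; rewrite eL => -[->]].
by rewrite /edge_fun (gt_eqF L0) eL eqxx.
Qed.

Lemma harmonic_tgt_inf e : len e = None -> a e = 0 /\ g (PV (tgt e)) = g (PV (src e)).
Proof.
move=> eL; have [st [_ [Btgt _]]] := g_harmonic (p := PV (tgt e)) isT.
move: (Btgt e erefl); rewrite /end_slope eL => -[_ [M HM]].
have [t1 t1M t10] : exists2 t1 : R, M < t1 & 0 <= t1.
  by exists (`|M| + 1); have := ler_norm M; have := normr_ge0 M; lra.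
have [-> <-] : a e = 0 /\ g (PV (src e)) = g (PV (tgt e)).
  have t1M' : M < t1 + 1 by lra.
  apply: (@int_affine_inj _ _ _ _ _ t1 (t1 + 1)); first by rewrite lt_eqF // ltrDl.
  - by rewrite -a_affine ?eL // HM // mul0r addr0.
  - by rewrite -a_affine ?eL ?HM ?mul0r ?addr0 ?addr_ge0.
done.
Qed.

Lemma harmonic_end_slope e b : end_slope g e b -> b = - a e.
Proof.
rewrite /end_slope; case eL: (len e) => [L|]; last first.
  by move=> [-> _]; rewrite (harmonic_tgt_inf eL).1 oppr0.
move/bwd_slope_uniq; apply; have L0 := len_pos eL.
have onE y : 0 <= y <= L -> edge_fun g e y = g (PV (src e)) + (a e)%:~R * y.
  by move=> yL; apply: a_affine => [|L']; [lra | rewrite eL => -[<-]; lra].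
by exists L => // x xL; rewrite !onE ?intrN; [ring | lra..].
Qed.

Lemma harmonic_net_flow v : net_flow a v = 0.
Proof.
have [sv [Fsrc [Btgt sum0]]] := g_harmonic (p := PV v) isT.
rewrite /net_flow [RHS]sum0; apply: eq_bigr => e _; rewrite -mulrN; congr (_ + _).
  by case: eqP => [ev|_]; rewrite ?mul0r // (fwd_slope_uniq (Fsrc e ev) (a_src e)).
by case: eqP => [ev|_]; rewrite ?mul0r ?oppr0 // (harmonic_end_slope (Btgt e ev)).
Qed.

End EdgeSlopes.

Lemma harmonic_const p q : valid p -> valid q -> g p = g q.
Proof.
have [a Ha] := fin_all_exists harmonic_edge_affine.
have a_src e := (Ha e).1; have a_affine e := (Ha e).2.
have fin := harmonic_tgt_fin a_affine; have inf := harmonic_tgt_inf a_affine.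
have flow := harmonic_net_flow a_src a_affine.
have a0 := potential_flow0 (c := fun v => g (PV v)) fin inf flow.
have c_const := potential_const (c := fun v => g (PV v)) fin inf flow.
suff on_vertex r : valid r -> exists v, g r = g (PV v).
  by move=> /on_vertex[v ->] /on_vertex[w ->]; apply: c_const.
case: r => [v _|e t]; first by exists v.
rewrite /= /in_edge => /andP[t0 tL]; exists (src e).
have -> : g (PE e t) = edge_fun g e t.
  by rewrite /edge_fun (gt_eqF t0); case: (len e) tL => // L /lt_eqF ->.
rewrite a_affine ?a0 ?mul0r ?addr0 ?(ltW t0) // => L eL.
by move: tL; rewrite eL => /ltW.
Qed.

End Harmonic.

Theorem lemma2 (R : realType) (G : tcurve R) (s : real_str G)
  (D1 D2 : rpoint G -> int) (f : rpoint G -> R) :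
  divisor D1 -> divisor D2 -> real_div s D1 -> real_div s D2 ->
  rational_fun f -> laplacian_eq f (fun p => D2 p - D1 p) ->
  forall p, valid p -> f (rs_map s p) = f p.
Proof.
move=> _ _ D1_real D2_real _ Hf p vp.
pose h q := f (rs_map s q) - f q.
have h_harmonic : laplacian_eq h (fun _ => 0).
  apply: eq_laplacian_eq (laplacian_eqB (laplacian_eq_rs_map s Hf) Hf) => q vq.
  by rewrite D1_real // D2_real // subrr.
have := harmonic_const h_harmonic vp (valid_rs_map s vp).
by rewrite /h rs_mapK; lra.
Qed.
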